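(* Let $\eta>0$ and $L>0$ be the strong monotonicity and Lipschitz constants of a mapping $F$ as in the context, and let $\nu>0$. Let $e_0>0$ satisfy $\nu\ge L\sqrt{e_0/2}$, and define error functions recursively by $e_k(\gamma_0,\dots,\gamma_{k-1})=(1-\eta\gamma_{k-1})e_{k-1}(\gamma_0,\dots,\gamma_{k-2})+\gamma_{k-1}^2\nu^2$ for $k\ge1$. Let $\gamma_0^*=\frac{\eta}{2\nu^2}e_0$ and $\gamma_k^*=\gamma_{k-1}^*(1-\frac{\eta}{2}\gamma_{k-1}^* )$ for $k\ge1$. Then: (a) for all $k\ge0$, $e_k(\gamma_0^*,\dots,\gamma_{k-1}^* )=\frac{2\nu^2}{\eta}\gamma_k^*$; (b) for each $k\ge1$, $(\gamma_0^*,\dots,\gamma_{k-1}^* )$ minimizes $e_k$ over $\mathbb G_k\triangleq\{\alpha\in\mathbb R^k:0<\alpha_j\le\frac{\eta}{L^2},\ j=1,\dots,k\}$; more precisely, for every $(\gamma_0,\dots,\gamma_{k-1})\in\mathbb G_k$, $e_k(\gamma_0,\dots,\gamma_{k-1})-e_k(\gamma_0^*,\dots,\gamma_{k-1}^* )\ge\nu^2(\gamma_{k-1}-\gamma_{k-1}^* )^2$.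
   Context: $F:X\to\mathbb R^n$ is a single-valued mapping on a nonempty closed convex set $X\subseteq\mathbb R^n$ which is Lipschitz continuous with constant $L$ ($\|F(x)-F(y)\|\le L\|x-y\|$) and strongly monotone with constant $\eta$ ($(F(x)-F(y))^T(x-y)\ge\eta\|x-y\|^2$) on $X$. *)

From HB Require Import structures.
From mathcomp Require Import all_boot all_order all_algebra.
From mathcomp Require Import all_classical all_reals all_analysis.
Set Implicit Arguments. Unset Strict Implicit. Unset Printing Implicit Defensive.
Import Order.TTheory GRing.Theory Num.Theory.
Import numFieldNormedType.Exports.
Local Open Scope classical_set_scope.
Local Open Scope ring_scope.

Section Defs.
Variables (R : realType) (n : nat).

Definition dotv (u v : 'rV[R]_n) : R := \sum_(i < n) u 0 i * v 0 i.
Definition enorm (u : 'rV[R]_n) : R := Num.sqrt (dotv u u).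

Definition convex_subset (X : set 'rV[R]_n) : Prop :=
  forall x y t, X x -> X y -> 0 <= t <= 1 -> X (t *: x + (1 - t) *: y).

Definition lipschitz_with_on (X : set 'rV[R]_n) (F : 'rV[R]_n -> 'rV[R]_n) (L : R) :=
  forall x y, X x -> X y -> enorm (F x - F y) <= L * enorm (x - y).

Definition strongly_monotone_with_on (X : set 'rV[R]_n) (F : 'rV[R]_n -> 'rV[R]_n)
  (eta : R) :=
  forall x y, X x -> X y -> dotv (F x - F y) (x - y) >= eta * enorm (x - y) ^+ 2.
End Defs.

(* e_k(g_0,...,g_{k-1}) : error recursion, depends on g 0 .. g (k-1) only *)
Fixpoint err {R : realType} (eta nu e0 : R) (g : nat -> R) (k : nat) : R :=
  match k with
  | 0 => e0
  | k'.+1 => (1 - eta * g k') * err eta nu e0 g k' + g k' ^+ 2 * nu ^+ 2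
  end.

Fixpoint gstar {R : realType} (eta nu e0 : R) (k : nat) : R :=
  match k with
  | 0 => eta / (2 * nu ^+ 2) * e0
  | k'.+1 => gstar eta nu e0 k' * (1 - eta / 2 * gstar eta nu e0 k')
  end.

(* Along gamma*, e_k = (2 nu^2 / eta) gamma*_k, which is exactly the stationarity condition
   of g |-> -eta g e_k + g^2 nu^2 at g = gamma*_k; so the one-step gap between any g and
   gamma*_k is (1 - eta g)(e_k - e*_k) + nu^2 (g - gamma*_k)^2.  As long as eta g <= 1 the
   first term is nonnegative by induction, which gives both the optimality and the
   quadratic gap.  The constraint eta g <= 1 on G_k follows from eta <= L, itself a
   consequence of strong monotonicity and Lipschitz continuity at two distinct points. *)
From HB Require Import structures.
From mathcomp Require Import all_boot all_order all_algebra.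
From mathcomp Require Import all_classical all_reals all_analysis.
From mathcomp Require Import ring lra.
Import Order.TTheory GRing.Theory Num.Theory.
Import numFieldNormedType.Exports.
Local Open Scope classical_set_scope.
Local Open Scope ring_scope.

Section EuclideanNorm.
Context {R : realType} {n : nat}.
Implicit Types u v : 'rV[R]_n.

Lemma dotv_ge0 u : 0 <= dotv u u.
Proof. by apply: sumr_ge0 => i _; rewrite -expr2 sqr_ge0. Qed.

Lemma dotv_eq0 u : (dotv u u == 0) = (u == 0).
Proof.
apply/idP/eqP => [|->]; last by rewrite /dotv big1 // => i _; rewrite mxE mul0r.
rewrite /dotv psumr_eq0 => [/allP u0|i _]; last by rewrite -expr2 sqr_ge0.
apply/rowP => i; rewrite mxE.
by have /= := u0 i (mem_index_enum i); rewrite -expr2 sqrf_eq0 => /eqP.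
Qed.

Lemma enorm_sqr u : enorm u ^+ 2 = dotv u u.
Proof. by rewrite /enorm sqr_sqrtr // dotv_ge0. Qed.

(* Expand [0 <= |t u - v|^2]. *)
Lemma dotv_scale_le t u v : 2 * t * dotv u v <= t ^+ 2 * dotv u u + dotv v v.
Proof.
have : 0 <= dotv (t *: u - v) (t *: u - v) by exact: dotv_ge0.
have -> : dotv (t *: u - v) (t *: u - v)
          = t ^+ 2 * dotv u u - 2 * t * dotv u v + dotv v v.
  rewrite /dotv !mulr_sumr -sumrB -big_split /=.
  by apply: eq_bigr => i _; rewrite !mxE; ring.
lra.
Qed.

End EuclideanNorm.

Lemma strongly_monotone_le_lipschitz {R : realType} {n : nat} {X : set 'rV[R]_n}
    {F : 'rV[R]_n -> 'rV[R]_n} {eta L : R} :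
  (exists x y, X x /\ X y /\ x != y) ->
  lipschitz_with_on X F L -> strongly_monotone_with_on X F eta -> 0 < L ->
  eta <= L.
Proof.
move=> [x [y [Xx [Xy xy]]]] lipF monF L_gt0.
set u := F x - F y; set d := x - y.
have d_gt0 : 0 < dotv d d.
  by rewrite lt_def dotv_ge0 dotv_eq0 subr_eq0 xy.
have u_le : dotv u u <= L ^+ 2 * dotv d d.
  rewrite -!enorm_sqr -exprMn; apply: lerXn2r; last exact: lipF.
    by rewrite nnegrE sqrtr_ge0.
  by rewrite nnegrE mulr_ge0 ?sqrtr_ge0 ?ltW.
have ud_ge : eta * dotv d d <= dotv u d by rewrite -enorm_sqr; exact: monF.
(* Young's inequality with weight [1/L]: 2 <u,d> / L <= |u|^2 / L^2 + |d|^2 <= 2 |d|^2. *)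
have young := dotv_scale_le L^-1 u d.
have u_scaled : L^-1 ^+ 2 * dotv u u <= dotv d d.
  rewrite -(ler_pM2l (exprn_gt0 2 L_gt0)) mulrA -exprMn mulfV ?gt_eqF //.
  by rewrite expr1n mul1r.
have ud_le : dotv u d <= L * dotv d d.
  have Linv_gt0 : 0 < L^-1 by rewrite invr_gt0.
  rewrite -(ler_pM2l Linv_gt0) mulrA mulVf ?gt_eqF // mul1r.
  lra.
by rewrite -(ler_pM2r d_gt0); lra.
Qed.

Section OptimalSteps.
Context {R : realType} {eta nu e0 : R}.
Hypotheses (eta_gt0 : 0 < eta) (nu_gt0 : 0 < nu).
Local Notation err := (err eta nu e0).
Local Notation gs := (gstar eta nu e0).

Lemma err_gstar k : err gs k = 2 * nu ^+ 2 / eta * gs k.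
Proof.
elim: k => [|k IH] /=; last by rewrite IH; field; rewrite gt_eqF.
by field; rewrite ?mulf_neq0 ?expf_neq0 ?gt_eqF.
Qed.

Lemma gstar_bounds c : 0 < e0 -> gs 0 <= c -> eta * c <= 1 ->
  forall k, 0 < gs k <= c.
Proof.
move=> e0_gt0 gs0_le etac_le; elim=> [|k /andP[gs_gt0 gs_le]] /=.
  by rewrite gs0_le andbT mulr_gt0 // divr_gt0 // mulr_gt0 // exprn_gt0.
have etags_le : eta * gs k <= 1 by apply: le_trans etac_le; rewrite ler_pM2l.
have half_le : 0 <= eta / 2 * gs k < 1.
  by rewrite mulr_ge0 ?divr_ge0 ?ltW //= mulrAC ltr_pdivrMr // mul1r; lra.
apply/andP; split; first by rewrite mulr_gt0 // subr_gt0; case/andP: half_le.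
by apply: le_trans gs_le; rewrite ger_pMr // lerBlDr lerDl; case/andP: half_le.
Qed.

Lemma err_step_gap g k :
  eta * g k <= 1 -> err gs k <= err g k ->
  nu ^+ 2 * (g k - gs k) ^+ 2 <= err g k.+1 - err gs k.+1.
Proof.
move=> etag_le err_le /=.
have eta_err : eta * err gs k = 2 * nu ^+ 2 * gs k.
  by rewrite err_gstar; field; rewrite gt_eqF.
have -> : (1 - eta * g k) * err g k + g k ^+ 2 * nu ^+ 2
          - ((1 - eta * gs k) * err gs k + gs k ^+ 2 * nu ^+ 2)
        = (1 - eta * g k) * (err g k - err gs k)
          + (gs k - g k) * (eta * err gs k - 2 * nu ^+ 2 * gs k)
          + nu ^+ 2 * (g k - gs k) ^+ 2 by ring.
by rewrite eta_err subrr mulr0 addr0 lerDr mulr_ge0 // subr_ge0.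
Qed.

Lemma err_gstar_le g k : (forall j, (j < k)%N -> eta * g j <= 1) ->
  err gs k <= err g k.
Proof.
elim: k => [//|k IH] etag_le.
have gap := err_step_gap g k (etag_le k (ltnSn k)) (IH (fun j jk => etag_le j (ltnW jk))).
have : 0 <= nu ^+ 2 * (g k - gs k) ^+ 2 by rewrite mulr_ge0 ?sqr_ge0.
lra.
Qed.

Lemma err_sub_gstar_ge g k : (forall j, (j <= k)%N -> eta * g j <= 1) ->
  nu ^+ 2 * (g k - gs k) ^+ 2 <= err g k.+1 - err gs k.+1.
Proof.
move=> etag_le; apply: err_step_gap; first exact: etag_le.
by apply: err_gstar_le => j /ltnW; exact: etag_le.
Qed.

End OptimalSteps.

Lemma gstar0_le {R : realType} {eta L nu e0 : R} :
  0 < eta -> 0 < L -> 0 < nu -> 0 < e0 -> L * Num.sqrt (e0 / 2) <= nu ->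
  gstar eta nu e0 0 <= eta / L ^+ 2.
Proof.
move=> eta_gt0 L_gt0 nu_gt0 e0_gt0 nu_ge.
have : (L * Num.sqrt (e0 / 2)) ^+ 2 <= nu ^+ 2.
  apply: lerXn2r => //.
    by rewrite nnegrE mulr_ge0 ?sqrtr_ge0 ?ltW.
  by rewrite nnegrE ltW.
rewrite exprMn sqr_sqrtr => [e0L_le /=|]; last by rewrite divr_ge0 // ltW.
rewrite -subr_le0.
have -> : eta / (2 * nu ^+ 2) * e0 - eta / L ^+ 2
          = eta / (2 * nu ^+ 2 * L ^+ 2) * (e0 * L ^+ 2 - 2 * nu ^+ 2)
  by field; rewrite ?gt_eqF ?mulr_gt0 ?exprn_gt0.
apply: mulr_ge0_le0; first by rewrite ltW // divr_gt0 // !mulr_gt0 // exprn_gt0.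
by rewrite subr_le0; lra.
Qed.

Theorem proposition1 (R : realType) (n : nat) (X : set 'rV[R]_n)
  (F : 'rV[R]_n -> 'rV[R]_n) (eta L nu e0 : R) :
  X !=set0 -> closed X -> convex_subset X ->
  (exists x y, X x /\ X y /\ x != y) ->
  lipschitz_with_on X F L -> strongly_monotone_with_on X F eta ->
  0 < eta -> 0 < L -> 0 < nu -> 0 < e0 -> L * Num.sqrt (e0 / 2) <= nu ->
  (forall k : nat, err eta nu e0 (gstar eta nu e0) k
                   = 2 * nu ^+ 2 / eta * gstar eta nu e0 k) /\
  (forall k : nat, (1 <= k)%N ->
     (forall j : nat, (j < k)%N -> 0 < gstar eta nu e0 j <= eta / L ^+ 2) /\
     (forall g : nat -> R, (forall j : nat, (j < k)%N -> 0 < g j <= eta / L ^+ 2) ->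
        err eta nu e0 g k - err eta nu e0 (gstar eta nu e0) k
          >= nu ^+ 2 * (g k.-1 - gstar eta nu e0 k.-1) ^+ 2)).
Proof.
move=> _ _ _ two_points lipF monF eta_gt0 L_gt0 nu_gt0 e0_gt0 nu_ge.
have eta_le_L := strongly_monotone_le_lipschitz two_points lipF monF L_gt0.
have eta_step_le : eta * (eta / L ^+ 2) <= 1.
  by rewrite mulrA ler_pdivrMr ?exprn_gt0 // mul1r; nra.
split; first exact: err_gstar.
case=> [//|k] _; split=> [j _|g g_in].
  exact: gstar_bounds (gstar0_le eta_gt0 L_gt0 nu_gt0 e0_gt0 nu_ge) eta_step_le j.
apply: err_sub_gstar_ge => // j jk; apply: le_trans eta_step_le.
by have /andP[_ g_le] := g_in j jk; rewrite ler_pM2l.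
Qed.
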